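(* For all closed terms $s,t\in T(\Sigma_{FTP_/})$: if $s/c^n\sim t/c^n$ for all $n\in\mathbb N$, then $s\sim t$ (i.e. the Approximation Induction Principle $x=y$ if $x/c^n=y/c^n$ for all $n$ is sound for bisimilarity on $T(\Sigma_{FTP_/})$).
   Context: Fix a finite nonempty set $\mathcal A$ of actions, a finite set $\mathcal P$ of predicates, a subset $\mathcal P^I\subseteq\mathcal P$ of implicit predicates, and for each $P\in\mathcal P^I$ a set $\mathcal A_P\subseteq\mathcal A$. $\Sigma_{FTP_/}$ consists of $\delta$, constants $\kappa_P$ ($P\in\mathcal P$), unary prefixes $a.\_$ ($a\in\mathcal A$), binary $+$ and binary $\cdot/\cdot$. Semantics on closed terms: the least transition and predicate relations closed under: $a.x\xrightarrow{a}x$; $x\xrightarrow{a}x'\Rightarrow x+y\xrightarrow{a}x'$; $y\xrightarrow{a}y'\Rightarrow x+y\xrightarrow{a}y'$; $P\kappa_P$; $Px\Rightarrow P(x+y)$; $Py\Rightarrow P(x+y)$; $Px\Rightarrow P(a.x)$ for $P\in\mathcal P^I$, $a\in\mathcal A_P$; $x\xrightarrow{a}x'$ and $h\xrightarrow{c'}h'\Rightarrow x/h\xrightarrow{a}x'/h'$ for all actions $a,c'$; $Px\Rightarrow P(x/h)$. A fixed action $c$ is used: $c^0=\delta$, $c^{n+1}=c.c^n$. Bisimilarity $\sim$: largest symmetric relation $R$ with $(s,t)\in R$, $s\xrightarrow{a}s'$ implying $t\xrightarrow{a}t'$ for some $t'$ with $(s',t')\in R$, and $Ps$ implying $Pt$.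 *)

From mathcomp Require Import all_boot.
Set Implicit Arguments.
Unset Strict Implicit.
Unset Printing Implicit Defensive.

Inductive term (A Pr : Type) : Type :=
  | Delta : term A Pr
  | Kappa : Pr -> term A Pr
  | Pre : A -> term A Pr -> term A Pr
  | Plus : term A Pr -> term A Pr -> term A Pr
  | Div : term A Pr -> term A Pr -> term A Pr.

Arguments Delta {A Pr}.
Arguments Kappa {A Pr}.

Inductive step (A Pr : Type) : term A Pr -> A -> term A Pr -> Prop :=
  | step_pre a x : step (Pre a x) a x
  | step_plusl a x x' y : step x a x' -> step (Plus x y) a x'
  | step_plusr a x y y' : step y a y' -> step (Plus x y) a y'
  | step_div a c' x x' h h' :
      step x a x' -> step h c' h' -> step (Div x h) a (Div x' h').

(* predicate relation P x; imp = the implicit predicates P^I,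
   AP P = the set A_P (only relevant when P is implicit) *)
Inductive holds (A Pr : Type) (imp : Pr -> bool) (AP : Pr -> A -> bool)
  : Pr -> term A Pr -> Prop :=
  | holds_kappa P : holds imp AP P (Kappa P)
  | holds_plusl P x y : holds imp AP P x -> holds imp AP P (Plus x y)
  | holds_plusr P x y : holds imp AP P y -> holds imp AP P (Plus x y)
  | holds_pre P a x : imp P -> AP P a -> holds imp AP P x ->
      holds imp AP P (Pre a x)
  | holds_div P x h : holds imp AP P x -> holds imp AP P (Div x h).

Fixpoint cpow (A Pr : Type) (c : A) (n : nat) : term A Pr :=
  match n with
  | 0 => Delta
  | n.+1 => Pre c (cpow Pr c n)
  end.

Definition bisimulation (A Pr : Type) (imp : Pr -> bool) (AP : Pr -> A -> bool)
  (R : term A Pr -> term A Pr -> Prop) : Prop :=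
  (forall s t, R s t -> R t s) /\
  (forall s t, R s t -> forall a s', step s a s' ->
      exists t', step t a t' /\ R s' t') /\
  (forall s t, R s t -> forall P, holds imp AP P s -> holds imp AP P t).

Definition bisimilar (A Pr : Type) (imp : Pr -> bool) (AP : Pr -> A -> bool)
  (s t : term A Pr) : Prop :=
  exists R, bisimulation imp AP R /\ R s t.

From mathcomp Require Import all_boot.
From Stdlib Require List.
From Stdlib Require Import Classical.

Set Implicit Arguments.
Unset Strict Implicit.
Unset Printing Implicit Defensive.

(* Write u ~_n v when u / c^n and v / c^n are bisimilar; the relation
   "u ~_n v for every n" is itself a bisimulation.  Dividing by c^n lets a
   term perform exactly its first n steps, so ~_n is antitone in n.  If
   u ~_(n+1) v and u --a--> u', then for each n some a-derivative v_n of v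
   satisfies u' ~_n v_n.  Every term is finitely branching, so one candidate
   v' works for infinitely many n, hence by antitonicity for all n. *)

Lemma antitone_witness_in (T : Type) (Q : nat -> T -> Prop) (L : seq T) :
  (forall y m n, n <= m -> Q m y -> Q n y) ->
  (forall n, exists2 y, List.In y L & Q n y) ->
  exists2 y, List.In y L & forall n, Q n y.
Proof.
move=> Qanti; elim: L => [|y L IHL] witness; first by case: (witness 0).
case: (classic (forall n, Q n y)) => [Qy | /not_all_ex_not [n0 notQy]].
  by exists y => //; left.
have [n|z zL Qz] := IHL; last by exists z => //; right.
case: (witness (maxn n n0)) => w [<- | wL] Qw.
  by case: notQy; apply: Qanti (leq_maxr n n0) Qw.
by exists w => //; apply: Qanti (leq_maxl n n0) Qw.
Qed.

Section Approximation.

Variables (A Pr : Type) (imp : Pr -> bool) (AP : Pr -> A -> bool).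
Local Notation term := (term A Pr).
Local Notation bisimilar := (bisimilar imp AP).
Local Notation holds := (holds imp AP).

Lemma bisimilar_sym s t : bisimilar s t -> bisimilar t s.
Proof. by case=> R [[Rsym Rtransfer] Rst]; exists R; split; [split | apply: Rsym]. Qed.

Lemma bisimilar_step s t a s' : bisimilar s t -> step s a s' ->
  exists t', step t a t' /\ bisimilar s' t'.
Proof.
case=> R [[Rsym [Rstep Rholds]] Rst] /(Rstep _ _ Rst) [t' [tt' Rst']].
by exists t'; split => //; exists R.
Qed.

Lemma bisimilar_holds s t P : bisimilar s t -> holds P s -> holds P t.
Proof. by case=> R [[_ [_ Rholds]] Rst]; apply: Rholds. Qed.

Lemma holds_divE P x h : holds P (Div x h) -> holds P x.
Proof. by move=> H; inversion H. Qed.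

Lemma step_image_finite (t : term) :
  exists L : seq term, forall a t', step t a t' -> List.In t' L.
Proof.
elim: t => [|P|b x _|x [Lx Lx_ok] y [Ly Ly_ok]|x [Lx Lx_ok] h [Lh Lh_ok]].
- by exists [::] => a t' H; inversion H.
- by exists [::] => a t' H; inversion H.
- by exists [:: x] => a t' H; inversion H; left.
- exists (List.app Lx Ly) => a t' H; apply/List.in_or_app.
  inversion H as [|a' x1 x' y1 xx'|a' x1 y1 y' yy'|]; subst.
    by left; apply: Lx_ok xx'.
  by right; apply: Ly_ok yy'.
- exists (List.map (fun p => Div p.1 p.2) (List.list_prod Lx Lh)) => a t' H.
  inversion H as [| | |a' c' x1 x' h1 h' xx' hh']; subst.
  apply: (List.in_map (fun p : term * term => Div p.1 p.2) _ (x', h')).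
  by apply/List.in_prod; [apply: Lx_ok xx' | apply: Lh_ok hh'].
Qed.

Variable c : A.
Local Notation cp := (cpow Pr c).

Lemma step_div_cpow x a x' n : step x a x' ->
  step (Div x (cp n.+1)) a (Div x' (cp n)).
Proof. by move=> xx'; apply: step_div xx' (step_pre _ _). Qed.

Lemma step_div_cpowE x a z n : step (Div x (cp n)) a z ->
  exists m x', [/\ n = m.+1, z = Div x' (cp m) & step x a x'].
Proof.
move=> H; inversion H as [| | |a' c' x1 x' h h' xx' hh']; subst.
case: n hh' {H} => [|m] hh'; inversion hh'; subst.
by exists m, x'.
Qed.

Lemma bisimilar_div_cpow_antitone x y m n : n <= m ->
  bisimilar (Div x (cp m)) (Div y (cp m)) ->
  bisimilar (Div x (cp n)) (Div y (cp n)).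
Proof.
move=> le_nm xy_m.
pose R u v := exists x y n m, [/\ n <= m, u = Div x (cp n), v = Div y (cp n)
                              & bisimilar (Div x (cp m)) (Div y (cp m))].
exists R; split; last by exists x, y, n, m.
split; [|split] => u v [x1 [y1 [n1 [m1 [le_nm1 -> -> xy]]]]].
- by exists y1, x1, n1, m1; split=> //; apply: bisimilar_sym.
- move=> a u' /step_div_cpowE [n2 [x' [n1E -> xx']]]; subst n1.
  case: m1 le_nm1 xy => [|m2] // le_nm2 xy.
  have [z [yz x'z]] := bisimilar_step xy (step_div_cpow m2 xx').
  have [_ [y' [[<-] zE yy']]] := step_div_cpowE yz; subst z.
  exists (Div y' (cp n2)); split; first exact: step_div_cpow.
  by exists x', y', n2, m2.
- move=> P /holds_divE x1P; apply/holds_div/(holds_divE (h := cp m1)).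
  exact: bisimilar_holds xy (holds_div _ x1P).
Qed.

Lemma bisimulation_div_cpow :
  bisimulation imp AP
    (fun u v => forall n, bisimilar (Div u (cp n)) (Div v (cp n))).
Proof.
split; [|split] => u v uv.
- by move=> n; apply: bisimilar_sym.
- move=> a u' uu'; have [L L_ok] := step_image_finite v.
  pose Q n v' := step v a v' /\ bisimilar (Div u' (cp n)) (Div v' (cp n)).
  have Q_antitone y m n : n <= m -> Q m y -> Q n y.
    by move=> le_nm [vy uy]; split=> //; apply: bisimilar_div_cpow_antitone uy.
  have Q_witness n : exists2 y, List.In y L & Q n y.
    have [z [vz u'z]] := bisimilar_step (uv n.+1) (step_div_cpow n uu').
    have [_ [y [[<-] zE vy]]] := step_div_cpowE vz; subst z.
    by exists y; [apply: L_ok vy | split].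
  have [v' _ Qv'] := antitone_witness_in Q_antitone Q_witness.
  by exists v'; split; [case: (Qv' 0) | move=> n; case: (Qv' n)].
- move=> P uP; apply: (holds_divE (h := cp 0)).
  exact: bisimilar_holds (uv 0) (holds_div _ uP).
Qed.

End Approximation.

Theorem lemma4 (A Pr : finType) (imp : Pr -> bool) (AP : Pr -> A -> bool)
  (c : A) (s t : term A Pr) :
  (forall n : nat, bisimilar imp AP (Div s (cpow Pr c n)) (Div t (cpow Pr c n))) ->
  bisimilar imp AP s t.
Proof. by move=> st; eexists; split; [apply: bisimulation_div_cpow | apply: st]. Qed.
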